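(* Let $\hat K$ be the triangle with vertices $(0,0),(1,0),(0,1)$, $\hat b=\hat x_1\hat x_2(1-\hat x_1-\hat x_2)$, and $j\ge1$. If $\hat\tau=\hat b\,p$ with $p\in P_j^{hom}(\hat K;\mathbb{S})$ and $\widehat{\mathrm{div}}\,\hat\tau=0$ on $\hat K$, then $\hat\tau=0$.
   Context: $\mathbb{S}$ is the space of real symmetric $2\times2$ matrices; $P_j^{hom}(\hat K;\mathbb{S})$ denotes $\mathbb{S}$-valued polynomials that are homogeneous of degree $j$ in $(\hat x_1,\hat x_2)$; the divergence of a matrix field is taken row-wise. *)

From HB Require Import structures.
From mathcomp Require Import all_boot all_order all_algebra.
From mathcomp Require Import reals.
From mathcomp Require Import mpoly.
Set Implicit Arguments. Unset Strict Implicit. Unset Printing Implicit Defensive.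
Import Order.TTheory GRing.Theory Num.Theory.
Local Open Scope ring_scope.

Definition bubble (R : realType) : {mpoly R[2]} :=
  'X_(0 : 'I_2) * 'X_(1 : 'I_2) * (1 - 'X_(0 : 'I_2) - 'X_(1 : 'I_2)).

Definition in_ref_triangle (R : realType) (x : 'I_2 -> R) : Prop :=
  0 <= x 0 /\ 0 <= x 1 /\ x 0 + x 1 <= 1.

Definition mxdiv (R : realType) (tau : 'M[{mpoly R[2]}]_2) (i : 'I_2)
  : {mpoly R[2]} := \sum_(k < 2) (tau i k)^`M(k).

From HB Require Import structures.
From mathcomp Require Import all_boot all_order all_algebra.
From mathcomp Require Import reals.
From mathcomp Require Import mpoly.
From mathcomp Require Import ring lra.
Import Order.TTheory GRing.Theory Num.Theory.
Local Open Scope ring_scope.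

(* The proof works row by row.  First, a polynomial vanishing on the triangle is zero, since the
   triangle contains the infinite grid {(1/(a+2), 1/(b+2))}; so each row
   (b u, b v) of b p has identically zero divergence.  Splitting
   b = x0 x1 - (x0 + x1) x0 x1, this divergence is the difference of two
   homogeneous polynomials of degrees j + 1 and j + 2, both of which must
   vanish; the product rule then forces v = -u and d0 (x0 x1 u) = d1 (x0 x1 u),
   and a coefficient induction shows that the latter forces u = 0. *)

Section PlanarGrid.
Variables (R : idomainType) (t : nat -> R).
Hypothesis t_inj : injective t.

Lemma poly_eq0_on_seq (P : {poly R}) : (forall k, P.[t k] = 0) -> P = 0.
Proof.
move=> P0; apply: (@roots_geq_poly_eq0 _ _ (map t (iota 0 (size P)))).
- by apply/allP => _ /mapP [k _ ->]; rewrite /root P0.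
- by rewrite map_inj_uniq ?iota_uniq.
- by rewrite size_map size_iota.
Qed.

Definition pt2 (u v : R) : 'I_2 -> R := fun i => if val i == 0%N then u else v.

Lemma meval_pt2 (q : {mpoly R[2]}) u v :
  q.@[pt2 u v] = \sum_(m <- msupp q) q@_m * (u ^+ m 0 * v ^+ m 1).
Proof.
rewrite mevalE; apply: eq_bigr => m _; rewrite !big_ord_recr big_ord0 /= mul1r.
by congr (_ * (_ ^+ m _ * _ ^+ m _)); apply: val_inj.
Qed.

Lemma mcoeff2_delta (q : {mpoly R[2]}) m0 :
  q@_m0 = \sum_(m <- msupp q) q@_m * ((m 0 == m0 0)%:R * (m 1 == m0 1)%:R).
Proof.
rewrite {1}(mpolyE q) raddf_sum /=; apply: eq_bigr => m _.
rewrite mcoeffZ mcoeffX -natrM mulnb; congr (_ * (nat_of_bool _)%:R).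
apply/eqP/andP => [-> //|[/eqP e0 /eqP e1]].
by apply/mnmP => -[[|[|//]] ?];
  [rewrite (_ : Ordinal _ = 0) | rewrite (_ : Ordinal _ = 1)];
  rewrite ?e0 ?e1 //; apply: val_inj.
Qed.

(* A bivariate polynomial vanishing on the grid [range t × range t] is zero:
   first in the variable x0 for fixed x1 = t b, then coefficientwise in x1. *)
Lemma mpoly2_eq0_on_grid (q : {mpoly R[2]}) :
  (forall a b, q.@[pt2 (t a) (t b)] = 0) -> q = 0.
Proof.
move=> q0.
have slice0 b : \sum_(m <- msupp q) (q@_m * t b ^+ m 1) *: 'X^(m 0) = 0 :> {poly R}.
  apply: poly_eq0_on_seq => a; rewrite -(q0 a b) meval_pt2 horner_sum.
  by apply: eq_bigr => m _; rewrite hornerZ hornerXn; ring.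
have sliceCoef0 k : \sum_(m <- msupp q) (q@_m * (m 0 == k)%:R) *: 'X^(m 1) = 0 :> {poly R}.
  apply: poly_eq0_on_seq => b.
  have := congr1 (fun P : {poly R} => P`_k) (slice0 b).
  rewrite coef0 coef_sum horner_sum => h; apply: etrans h; apply: eq_bigr => m _.
  by rewrite hornerZ hornerXn coefZ coefXn eq_sym; ring.
apply/mpolyP => m0; rewrite mcoeff0 mcoeff2_delta.
have := congr1 (fun P : {poly R} => P`_(m0 1)) (sliceCoef0 (m0 0)).
rewrite coef0 coef_sum => h; apply: etrans h; apply: eq_bigr => m _.
by rewrite coefZ coefXn [m0 1 == _]eq_sym; ring.
Qed.

End PlanarGrid.

Lemma mderiv_dhomog (R : nzRingType) (n : nat) (d : nat) (p : {mpoly R[n]}) i :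
  p \is d.-homog -> p^`M(i) \is d.-1.-homog.
Proof.
move=> /dhomogP hp; apply/dhomogP => m; rewrite mcoeff_msupp mcoeff_mderiv => nz.
have /hp <- : (m + U_(i))%MM \in msupp p.
  by rewrite mcoeff_msupp; apply: contra nz => /eqP ->; rewrite mul0rn.
by rewrite /= mdegD mdeg1 addn1.
Qed.

Lemma dhomog_eq0 (R : nzRingType) (n d e : nat) (p : {mpoly R[n]}) :
  d != e -> p \is d.-homog -> p \is e.-homog -> p = 0.
Proof.
move=> de hd he; apply/eqP; apply: contraNT de => nz.
by apply/eqP; apply: dhomog_uniq nz hd he.
Qed.

Section Bubble.
Variable R : numDomainType.

Local Notation X0 := ('X_(0 : 'I_2) : {mpoly R[2]}).
Local Notation X1 := ('X_(1 : 'I_2) : {mpoly R[2]}).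

Lemma mderivXU (i k : 'I_2) : ('X_i : {mpoly R[2]})^`M(k) = (i == k)%:R.
Proof.
rewrite mderivX mnm1E; case: eqP => [->|_]; last by rewrite scale0r.
by rewrite -{1}[U_(k)%MM]add0m addmK mpolyX0 scale1r.
Qed.

Lemma mulX0X1_inj (w : {mpoly R[2]}) : X0 * X1 * w = 0 -> w = 0.
Proof.
move=> h; apply/mpolyP => m; rewrite mcoeff0.
by rewrite -(mcoeffMX w (U_((0%R : 'I_2)) + U_((1%R : 'I_2)))%MM m) mpolyXD mulrC h mcoeff0.
Qed.

Lemma div2_dhomog d (F G : {mpoly R[2]}) :
  F \is d.-homog -> G \is d.-homog -> F^`M(0) + G^`M(1) \is d.-1.-homog.
Proof. by move=> hF hG; apply: dhomogD; apply: mderiv_dhomog. Qed.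

Lemma div2_mul_coordsum (F G : {mpoly R[2]}) :
  ((X0 + X1) * F)^`M(0) + ((X0 + X1) * G)^`M(1)
  = (X0 + X1) * (F^`M(0) + G^`M(1)) + F + G.
Proof. by rewrite !mderivM !mderivD !mderivXU /=; ring. Qed.

(* A polynomial multiple of x0 x1 whose two partial derivatives agree is zero:
   d0 q = d1 q reads (m0 + 1) q_(m + e0) = (m1 + 1) q_(m + e1) on coefficients,
   which propagates the vanishing of the coefficients with m0 = 0 (true as x0
   divides q) to all coefficients, by induction on m0. *)
Lemma mulX0X1_mderiv_eq (c : {mpoly R[2]}) :
  (X0 * X1 * c)^`M(0) = (X0 * X1 * c)^`M(1) -> c = 0.
Proof.
move=> dq; apply: mulX0X1_inj; set q := X0 * X1 * c.
have qE : q = c * 'X_[U_((0%R : 'I_2)) + U_((1%R : 'I_2))] by rewrite mpolyXD mulrC.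
suff q0 k (m : 'X_{1..2}) : m 0 = k -> q@_m = 0.
  by apply/mpolyP => m; rewrite mcoeff0 (q0 (m 0)).
elim: k m => [|k IHk] m hm.
  apply: memN_msupp_eq0; rewrite qE (perm_mem (msuppMX _ _)).
  by apply/mapP => -[m' _ em]; move: hm; rewrite em !mnmDE !mnm1E.
pose m' := (m - U_((0%R : 'I_2)))%MM.
have mE : m = (m' + U_((0%R : 'I_2)))%MM.
  by apply/mnmP => i; rewrite mnmDE mnmBE mnm1E; case: eqP => [<-|_];
    rewrite ?hm ?subn0 ?addn0 // subn1 addn1.
have := congr1 (mcoeff m') dq; rewrite !mcoeff_mderiv -mE (IHk (m' + U_(1%R))%MM).
  by rewrite mul0rn => /eqP; rewrite mulrn_eq0 => /eqP.
by rewrite mnmDE mnm1E /= addn0 /m' mnmBE hm mnm1E subn1.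
Qed.

(* Core of the argument, one row at a time: if b (u, v) is divergence free,
   with b = x0 x1 (1 - x0 - x1) and u, v homogeneous of the same degree, then
   u = v = 0.  Writing F = x0 x1 u, G = x0 x1 v, the divergence splits as
   A - B with A = div (F, G) and B = div ((x0 + x1) (F, G)) homogeneous of
   consecutive degrees, so A = B = 0; the product rule then gives F + G = 0,
   i.e. v = -u, and A = 0 becomes d0 (x0 x1 u) = d1 (x0 x1 u). *)
Lemma bubble_row_div_free j (u v : {mpoly R[2]}) :
  u \is j.-homog -> v \is j.-homog ->
  (X0 * X1 * (1 - X0 - X1) * u)^`M(0) + (X0 * X1 * (1 - X0 - X1) * v)^`M(1) = 0 ->
  u = 0 /\ v = 0.
Proof.
move=> hu hv div0.
set F := X0 * X1 * u; set G := X0 * X1 * v.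
set A := F^`M(0) + G^`M(1).
set B := ((X0 + X1) * F)^`M(0) + ((X0 + X1) * G)^`M(1).
have AB : A = B.
  have bE w : X0 * X1 * (1 - X0 - X1) * w = X0 * X1 * w - (X0 + X1) * (X0 * X1 * w).
    by ring.
  apply/eqP; rewrite -subr_eq0 -div0 !bE !mderivB.
  by rewrite /A /B /F /G; apply/eqP; ring.
have hX0X1 : X0 * X1 \is 2.-homog.
  by apply: (@dhomogM _ _ _ 1 _ 1); rewrite dhomogX /= mdeg1.
have hF : F \is (2 + j).-homog by exact: dhomogM hX0X1 hu.
have hG : G \is (2 + j).-homog by exact: dhomogM hX0X1 hv.
have hsum : X0 + X1 \is 1.-homog by apply: dhomogD; rewrite dhomogX /= mdeg1.
have A0 : A = 0.
  apply: (@dhomog_eq0 _ _ (j.+1) (j.+2)); first by rewrite neq_ltn ltnSn.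
    exact: div2_dhomog hF hG.
  by rewrite AB; exact: div2_dhomog (dhomogM hsum hF) (dhomogM hsum hG).
have FG0 : F + G = 0.
  have := div2_mul_coordsum F G; rewrite -/A -/B -AB A0 mulr0 add0r.
  by move=> /esym.
have vE : v = - u.
  by apply/eqP; rewrite -addr_eq0 addrC; apply/eqP/mulX0X1_inj; rewrite mulrDr.
have u0 : u = 0.
  apply: mulX0X1_mderiv_eq; apply/eqP; rewrite -subr_eq0 -mderivN -mulrN -vE.
  exact/eqP.
by split=> //; rewrite vE u0 oppr0.
Qed.

End Bubble.

Section TriangleGrid.
Variable R : realFieldType.

(* The points 1/(k+2), k : nat, are pairwise distinct and lie in [0, 1/2],
   so that the grid they span lies in the reference triangle. *)
Definition grid_pt (k : nat) : R := (k.+2)%:R^-1.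

Lemma grid_pt_inj : injective grid_pt.
Proof. by move=> a b /invr_inj /eqP; rewrite eqr_nat => /eqP [->]. Qed.

Lemma grid_pt_ge0 k : 0 <= grid_pt k.
Proof. by rewrite invr_ge0 ler0n. Qed.

Lemma grid_pt_le_half k : grid_pt k <= 2^-1.
Proof. by rewrite lef_pV2 ?posrE ?ltr0n // ler_nat. Qed.

End TriangleGrid.

Lemma mpoly_eq0_on_triangle (R : realType) (q : {mpoly R[2]}) :
  (forall x : 'I_2 -> R, in_ref_triangle x -> q.@[x] = 0) -> q = 0.
Proof.
move=> q0; apply: (@mpoly2_eq0_on_grid _ _ (@grid_pt_inj R)) => a b; apply: q0.
have := grid_pt_ge0 R a; have := grid_pt_ge0 R b.
have := grid_pt_le_half R a; have := grid_pt_le_half R b.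
by rewrite /in_ref_triangle /pt2 /=; lra.
Qed.

Lemma mxdiv2 (R : realType) (tau : 'M[{mpoly R[2]}]_2) (i : 'I_2) :
  mxdiv tau i = (tau i 0)^`M(0) + (tau i 1)^`M(1).
Proof.
rewrite /mxdiv !big_ord_recr big_ord0 /= add0r.
by congr ((tau i _)^`M(_) + (tau i _)^`M(_)); apply: val_inj.
Qed.

Theorem lemma4p5 (R : realType) (j : nat) (p : 'M[{mpoly R[2]}]_2) :
  (1 <= j)%N ->
  p^T = p ->
  (forall i k : 'I_2, p i k \is j.-homog) ->
  (forall (x : 'I_2 -> R), in_ref_triangle x ->
     forall i : 'I_2, (mxdiv (map_mx (fun q => bubble R * q) p) i).@[x] = 0) ->
  map_mx (fun q => bubble R * q) p = 0.
Proof.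
move=> _ _ p_homog div0; apply/matrixP => i k; rewrite !mxE.
have row_div0 : mxdiv (map_mx (fun q => bubble R * q) p) i = 0.
  by apply: mpoly_eq0_on_triangle => x /div0.
rewrite mxdiv2 !mxE /bubble in row_div0.
have [pi0 pi1] := @bubble_row_div_free R j _ _ (p_homog i 0) (p_homog i 1) row_div0.
have [->|->] : k = 0 \/ k = 1 by case: k => -[|[|//]] ?; [left|right]; apply: val_inj.
- by rewrite pi0 mulr0.
- by rewrite pi1 mulr0.
Qed.
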